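(* Let $\mathcal{Q}\subseteq\Delta_{N\times M}$ be a nonempty compact convex set. Then strong duality holds between the problem $$\text{(P)}\quad \max_{p,\lambda\in\mathbb{R}^N,\ V\in\mathbb{R}^{N\times M}} \ \sum_{n=1}^N \lambda_n - \delta^\ast(V\mid\mathcal{Q})\ \ \text{s.t.}\ \sum_{n=1}^N p_n \exp\!\left(\frac{\lambda_n - V_{nm}}{p_n}\right) \le 1\ \forall m,\ p\ge 0,\ \sum_n p_n=1,$$ and the problem $$\text{(D)}\quad \min_{v\in\mathbb{R}^M,\ Q\in\mathcal{Q}} \ \log\sum_{m=1}^M \exp(v_m) + \max_{n=1,\dots,N}\left\{\sum_{m=1}^M Q_{nm}\left(\log Q_{nm}-v_m\right)\right\},$$ i.e. the optimal values of (P) and (D) coincide. Consequently, the robust capacity $\sup_{p\in\Delta_N}\inf_{Q\in\mathcal{Q}}I(p,Q)$ equals the optimal value of (D).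
   Context: $\Delta_N$ is the probability simplex in $\mathbb{R}^N$; $\Delta_{N\times M}$ is the set of $N\times M$ nonnegative matrices with each row summing to $1$. $I(p,Q)=\sum_{n,m}p_nQ_{nm}\log\frac{Q_{nm}}{\sum_l p_lQ_{lm}}$ (terms with $p_nQ_{nm}=0$ are zero). $\delta^\ast(V\mid\mathcal{Q})=\sup_{Q\in\mathcal{Q}}\sum_{n,m}V_{nm}Q_{nm}$. Convention $0\log 0=0$. The term $p_n\exp((\lambda_n-V_{nm})/p_n)$ at $p_n=0$ equals $0$ if $\lambda_n\le V_{nm}$ and $+\infty$ otherwise. *)

From Stdlib Require Import Reals Lra.
Open Scope R_scope.

(* vectors in R^N : nat -> R (only indices < N matter);
   matrices in R^{N x M} : nat -> nat -> R (only indices n<N, m<M matter) *)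

Fixpoint sumN (n : nat) (f : nat -> R) : R :=
  match n with O => 0 | S k => sumN k f + f k end.

Fixpoint maxUpTo (n : nat) (f : nat -> R) : R :=
  match n with O => f O | S k => Rmax (maxUpTo k f) (f (S k)) end.

(* max_{k < N} f k, for N >= 1 *)
Definition maxN (N : nat) (f : nat -> R) : R := maxUpTo (N - 1) f.

Definition in_simplex (N : nat) (p : nat -> R) : Prop :=
  (forall n, (n < N)%nat -> 0 <= p n) /\ sumN N p = 1.

Definition in_simplex_mat (N M : nat) (Q : nat -> nat -> R) : Prop :=
  forall n, (n < N)%nat -> in_simplex M (Q n).

Definition convex_set (Qs : (nat -> nat -> R) -> Prop) : Prop :=
  forall Q1 Q2 t, Qs Q1 -> Qs Q2 -> 0 <= t <= 1 ->
    Qs (fun n m => t * Q1 n m + (1 - t) * Q2 n m).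

(* compactness in R^{N x M} = sequential compactness w.r.t. the entries
   (n,m) with n<N, m<M *)
Definition compact_set (N M : nat) (Qs : (nat -> nat -> R) -> Prop) : Prop :=
  forall u : nat -> (nat -> nat -> R), (forall k, Qs (u k)) ->
    exists (phi : nat -> nat) (Qlim : nat -> nat -> R),
      (forall k, (phi k < phi (S k))%nat) /\ Qs Qlim /\
      forall n m, (n < N)%nat -> (m < M)%nat ->
        Un_cv (fun k => u (phi k) n m) (Qlim n m).

Definition is_lower_bound (E : R -> Prop) (m : R) : Prop := forall x, E x -> m <= x.
Definition is_glb (E : R -> Prop) (m : R) : Prop :=
  is_lower_bound E m /\ forall b, is_lower_bound E b -> b <= m.

Definition frob (N M : nat) (V Q : nat -> nat -> R) : R :=
  sumN N (fun n => sumN M (fun m => V n m * Q n m)).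

(* delta^*(V | Qs) = s  (support function value, as a relation) *)
Definition is_support_value (N M : nat) (Qs : (nat -> nat -> R) -> Prop)
  (V : nat -> nat -> R) (s : R) : Prop :=
  is_lub (fun x => exists Q, Qs Q /\ x = frob N M V Q) s.

(* feasibility of (p, lambda, V) in (P):
   sum_n p_n exp((lambda_n - V_nm)/p_n) <= 1 for all m, where the term with
   p_n = 0 is 0 if lambda_n <= V_nm and +infinity otherwise. *)
Definition persp_term (p a : R) : R :=
  if Rlt_dec 0 p then p * exp (a / p) else 0.

Definition P_feasible (N M : nat) (p lam : nat -> R) (V : nat -> nat -> R) : Prop :=
  in_simplex N p /\
  forall m, (m < M)%nat ->
    (forall n, (n < N)%nat -> p n = 0 -> lam n <= V n m) /\
    sumN N (fun n => persp_term (p n) (lam n - V n m)) <= 1.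

Definition P_values (N M : nat) (Qs : (nat -> nat -> R) -> Prop) (x : R) : Prop :=
  exists (p lam : nat -> R) (V : nat -> nat -> R) (s : R),
    P_feasible N M p lam V /\ is_support_value N M Qs V s /\
    x = sumN N lam - s.

Definition xlnx (x : R) : R := if Req_EM_T x 0 then 0 else x * ln x.

Definition D_obj (N M : nat) (v : nat -> R) (Q : nat -> nat -> R) : R :=
  ln (sumN M (fun m => exp (v m))) +
  maxN N (fun n => sumN M (fun m => xlnx (Q n m) - Q n m * v m)).

Definition D_values (N M : nat) (Qs : (nat -> nat -> R) -> Prop) (x : R) : Prop :=
  exists (v : nat -> R) (Q : nat -> nat -> R), Qs Q /\ x = D_obj N M v Q.

Definition mutual_info (N M : nat) (p : nat -> R) (Q : nat -> nat -> R) : R :=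
  sumN N (fun n => sumN M (fun m =>
    if Req_EM_T (p n * Q n m) 0 then 0
    else p n * Q n m * ln (Q n m / sumN N (fun l => p l * Q l m)))).

Definition cap_values (N M : nat) (Qs : (nat -> nat -> R) -> Prop) (x : R) : Prop :=
  exists p, in_simplex N p /\
    is_glb (fun y => exists Q, Qs Q /\ y = mutual_info N M p Q) x.

(* Weak duality is pointwise in the channel: [ln y <= y - 1] applied to the constraint of (P)
   gives [sum lam - <V, Q> <= I(p, Q)], and Gibbs' inequality against the softmax of [v],
   together with [average over rows <= max over rows], gives [I(p, Q) <= D(v, Q)].

   For the converse let [c] be the value of (D). For a single channel [Q], run Hedge over the
   inputs [n] with gains the divergences of the rows of [Q] from the output of a slightly
   smoothed channel; the averaged outputs are a test point of (D), so the gains average to at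
   least [c], and the logarithmic ratios of channel to output, averaged along the run, are
   multipliers [V] with [- <V, Q> >= c - eps]. Averaging is legitimate because the constraint
   of (P) is a perspective of [exp], hence jointly convex. A second Hedge run, over a finite net
   of the compact convex set [Qs] and answered at each step by the response to the current
   mixture, yields one [V] that is good for all of [Qs] at once. So the values of (P) approach
   [c], and the robust capacity lies between them. *)

From Stdlib Require Import Reals Lra Lia Classical ClassicalEpsilon FunctionalExtensionality.
Open Scope R_scope.

(** * Finite sums and maxima *)

Lemma sumN_ext n f g : (forall i, (i < n)%nat -> f i = g i) -> sumN n f = sumN n g.
Proof.
  induction n as [|n IH]; simpl; intros H; [reflexivity|].
  rewrite IH by (intros; apply H; lia). rewrite H by lia. reflexivity.
Qed.

Lemma sumN_le n f g : (forall i, (i < n)%nat -> f i <= g i) -> sumN n f <= sumN n g.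
Proof.
  induction n as [|n IH]; simpl; intros H; [lra|].
  assert (f n <= g n) by (apply H; lia).
  assert (sumN n f <= sumN n g) by (apply IH; intros; apply H; lia). lra.
Qed.

Lemma sumN_plus n f g : sumN n (fun i => f i + g i) = sumN n f + sumN n g.
Proof. induction n; simpl; [lra|]. rewrite IHn. lra. Qed.

Lemma sumN_minus n f g : sumN n (fun i => f i - g i) = sumN n f - sumN n g.
Proof. induction n; simpl; [lra|]. rewrite IHn. lra. Qed.

Lemma sumN_scal_l n c f : sumN n (fun i => c * f i) = c * sumN n f.
Proof. induction n; simpl; [lra|]. rewrite IHn. lra. Qed.

Lemma sumN_scal_r n c f : sumN n (fun i => f i * c) = sumN n f * c.
Proof. induction n; simpl; [lra|]. rewrite IHn. lra. Qed.

Lemma sumN_opp n f : sumN n (fun i => - f i) = - sumN n f.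
Proof. induction n; simpl; [lra|]. rewrite IHn. lra. Qed.

Lemma sumN_const n c : sumN n (fun _ => c) = INR n * c.
Proof. induction n; simpl sumN; [simpl; lra|]. rewrite IHn, S_INR. lra. Qed.

Lemma sumN_eq0 n f : (forall i, (i < n)%nat -> f i = 0) -> sumN n f = 0.
Proof. intros H. rewrite (sumN_ext n f (fun _ => 0)), sumN_const by auto. lra. Qed.

Lemma sumN_swap a b (f : nat -> nat -> R) :
  sumN a (fun i => sumN b (fun j => f i j)) = sumN b (fun j => sumN a (fun i => f i j)).
Proof.
  induction a; simpl.
  - symmetry. apply sumN_eq0. reflexivity.
  - rewrite IHa, <- sumN_plus. reflexivity.
Qed.

Lemma sumN_nonneg n f : (forall i, (i < n)%nat -> 0 <= f i) -> 0 <= sumN n f.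
Proof.
  intros H. apply Rle_trans with (sumN n (fun _ => 0)).
  - rewrite sumN_const. lra.
  - apply sumN_le. exact H.
Qed.

Lemma sumN_pos n f : (1 <= n)%nat -> (forall i, (i < n)%nat -> 0 < f i) -> 0 < sumN n f.
Proof.
  destruct n as [|n]; [lia|]. intros _ H. simpl.
  assert (0 <= sumN n f) by (apply sumN_nonneg; intros; left; apply H; lia).
  assert (0 < f n) by (apply H; lia). lra.
Qed.

Lemma sumN_ge_term n f i :
  (forall j, (j < n)%nat -> 0 <= f j) -> (i < n)%nat -> f i <= sumN n f.
Proof.
  induction n as [|n IH]; intros H Hi; [lia|]. simpl.
  assert (0 <= f n) by (apply H; lia).
  destruct (Nat.eq_dec i n) as [->|Hne].
  - assert (0 <= sumN n f) by (apply sumN_nonneg; intros; apply H; lia). lra.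
  - assert (f i <= sumN n f) by (apply IH; [intros; apply H|]; lia). lra.
Qed.

Lemma sumN_abs n f : Rabs (sumN n f) <= sumN n (fun i => Rabs (f i)).
Proof.
  induction n; simpl; [rewrite Rabs_R0; lra|].
  eapply Rle_trans; [apply Rabs_triang|]. lra.
Qed.

Lemma sumN2_ext A B (f g : nat -> nat -> R) :
  (forall n m, (n < A)%nat -> (m < B)%nat -> f n m = g n m) ->
  sumN A (fun n => sumN B (f n)) = sumN A (fun n => sumN B (g n)).
Proof. intros H. apply sumN_ext. intros. apply sumN_ext. auto. Qed.

Lemma sumN2_le A B (f g : nat -> nat -> R) :
  (forall n m, (n < A)%nat -> (m < B)%nat -> f n m <= g n m) ->
  sumN A (fun n => sumN B (f n)) <= sumN A (fun n => sumN B (g n)).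
Proof. intros H. apply sumN_le. intros. apply sumN_le. auto. Qed.

Lemma sumN2_plus A B (f g : nat -> nat -> R) :
  sumN A (fun n => sumN B (fun m => f n m + g n m)) =
  sumN A (fun n => sumN B (f n)) + sumN A (fun n => sumN B (g n)).
Proof. rewrite <- sumN_plus. apply sumN_ext. intros. apply sumN_plus. Qed.

Lemma sumN2_minus A B (f g : nat -> nat -> R) :
  sumN A (fun n => sumN B (fun m => f n m - g n m)) =
  sumN A (fun n => sumN B (f n)) - sumN A (fun n => sumN B (g n)).
Proof. rewrite <- sumN_minus. apply sumN_ext. intros. apply sumN_minus. Qed.

Lemma maxUpTo_ge n f k : (k <= n)%nat -> f k <= maxUpTo n f.
Proof.
  induction n as [|n IH]; intros Hk; simpl.
  - replace k with 0%nat by lia. lra.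
  - destruct (Nat.eq_dec k (S n)) as [->|]; [apply Rmax_r|].
    eapply Rle_trans; [apply IH; lia|apply Rmax_l].
Qed.

Lemma maxUpTo_attained n f : exists k, (k <= n)%nat /\ maxUpTo n f = f k.
Proof.
  induction n as [|n [k [Hk E]]]; simpl; [exists 0%nat; auto|]. rewrite E.
  destruct (Rle_dec (f k) (f (S n))).
  - exists (S n). split; [lia|]. apply Rmax_right; auto.
  - exists k. split; [lia|]. apply Rmax_left; lra.
Qed.

Lemma maxN_ge N f k : (k < N)%nat -> f k <= maxN N f.
Proof. intros. apply maxUpTo_ge. lia. Qed.

Lemma maxN_attained N f : (1 <= N)%nat -> exists k, (k < N)%nat /\ maxN N f = f k.
Proof.
  intros. destruct (maxUpTo_attained (N - 1) f) as [k [Hk E]].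
  exists k. split; [lia|exact E].
Qed.

Lemma maxN_ge_average N f p : in_simplex N p -> sumN N (fun n => p n * f n) <= maxN N f.
Proof.
  intros [Hp Hs]. apply Rle_trans with (sumN N (fun n => p n * maxN N f)).
  - apply sumN_le. intros i Hi. apply Rmult_le_compat_l; auto. apply maxN_ge; auto.
  - rewrite sumN_scal_r, Hs. lra.
Qed.

(** * Elementary inequalities *)

Lemma ln_le x y : 0 < x -> x <= y -> ln x <= ln y.
Proof. intros. destruct (Req_dec x y) as [->|]; [lra|]. left; apply ln_increasing; lra. Qed.

Lemma ln_le_minus_1 y : 0 < y -> ln y <= y - 1.
Proof. intros Hy. pose proof (exp_ineq1_le (ln y)) as H. rewrite exp_ln in H; lra. Qed.

Lemma ln_div x y : 0 < x -> 0 < y -> ln (x / y) = ln x - ln y.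
Proof.
  intros. unfold Rdiv. rewrite ln_mult, ln_Rinv; try apply Rinv_0_lt_compat; auto.
Qed.

Lemma ln_1_minus_ge eta : 0 < eta <= 1/2 -> - (2 * eta) <= ln (1 - eta).
Proof.
  intros H. pose proof (ln_le_minus_1 (/ (1 - eta)) ltac:(apply Rinv_0_lt_compat; lra)) as Hl.
  rewrite ln_Rinv in Hl by lra.
  assert (/ (1 - eta) - 1 <= 2 * eta).
  { replace (/ (1 - eta) - 1) with (eta / (1 - eta)) by (field; lra).
    apply Rmult_le_reg_r with (1 - eta); [lra|].
    unfold Rdiv. rewrite Rmult_assoc, Rinv_l by lra. nra. }
  lra.
Qed.

Lemma exp_neg_le_quadratic x : 0 <= x -> exp (- x) <= 1 - x + x * x.
Proof.
  intros Hx.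
  assert (E : exp x = exp (x / 2) * exp (x / 2)) by (rewrite <- exp_plus; f_equal; lra).
  pose proof (exp_ineq1_le (x / 2)).
  assert (exp x >= (1 + x / 2) * (1 + x / 2)) by (rewrite E; nra).
  assert (exp (- x) * exp x = 1) by (rewrite <- exp_plus, Rplus_opp_l; apply exp_0).
  pose proof (exp_pos (- x)).
  assert ((1 - x + x * x) * ((1 + x / 2) * (1 + x / 2)) >= 1) by nra.
  nra.
Qed.

Lemma gibbs_term x r : 0 <= x -> 0 < r -> x - r <= x * (ln x - ln r).
Proof.
  intros Hx Hr. destruct (Req_dec x 0) as [->|]; [lra|].
  pose proof (ln_le_minus_1 (r / x) ltac:(apply Rdiv_lt_0_compat; lra)) as Hl.
  rewrite ln_div in Hl by lra.
  apply Rmult_le_compat_l with (r := x) in Hl; [|lra].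
  replace (x * (r / x - 1)) with (r - x) in Hl by (field; lra). lra.
Qed.

Lemma xlnx_pos x : 0 < x -> xlnx x = x * ln x.
Proof. intros. unfold xlnx. destruct (Req_EM_T x 0); [lra|auto]. Qed.

Lemma xlnx_0 : xlnx 0 = 0.
Proof. unfold xlnx. destruct (Req_EM_T 0 0); [auto|lra]. Qed.

Lemma xlnx_le_0 x : 0 <= x <= 1 -> xlnx x <= 0.
Proof.
  intros H. destruct (Req_dec x 0) as [->|]; [rewrite xlnx_0; lra|].
  rewrite xlnx_pos by lra.
  assert (ln x <= 0) by (rewrite <- ln_1; apply ln_le; lra).
  nra.
Qed.

Lemma xlnx_gibbs x r : 0 <= x -> 0 < r -> x - r <= xlnx x - x * ln r.
Proof.
  intros Hx Hr. destruct (Req_dec x 0) as [->|]; [rewrite xlnx_0; lra|].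
  rewrite xlnx_pos by lra. pose proof (gibbs_term x r Hx Hr). lra.
Qed.

(* Both Jensen inequalities compare with the tangent line at the weighted mean. *)
Lemma exp_jensen T (a y : nat -> R) :
  (1 <= T)%nat -> (forall t, (t < T)%nat -> 0 < a t) ->
  sumN T a * exp (sumN T (fun t => a t * y t) / sumN T a)
  <= sumN T (fun t => a t * exp (y t)).
Proof.
  intros HT Ha. set (S := sumN T a). assert (HS : 0 < S) by (apply sumN_pos; auto).
  set (x0 := sumN T (fun t => a t * y t) / S).
  apply Rle_trans with (sumN T (fun t => exp x0 * (a t + (a t * y t - x0 * a t)))).
  - rewrite sumN_scal_l, sumN_plus, sumN_minus, sumN_scal_l. fold S.
    unfold x0. right. field. lra.
  - apply sumN_le. intros t Ht. pose proof (Ha t Ht).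
    pose proof (exp_ineq1_le (y t - x0)).
    replace (exp (y t)) with (exp x0 * exp (y t - x0)) by (rewrite <- exp_plus; f_equal; ring).
    replace (exp x0 * (a t + (a t * y t - x0 * a t))) with (a t * (exp x0 * (1 + (y t - x0))))
      by ring.
    apply Rmult_le_compat_l; [lra|]. apply Rmult_le_compat_l; [left; apply exp_pos|lra].
Qed.

Lemma ln_jensen T (a r : nat -> R) :
  (forall t, (t < T)%nat -> 0 <= a t) -> sumN T a = 1 ->
  (forall t, (t < T)%nat -> 0 < r t) ->
  sumN T (fun t => a t * ln (r t)) <= ln (sumN T (fun t => a t * r t)).
Proof.
  intros Ha Hs Hr. set (x0 := sumN T (fun t => a t * r t)).
  assert (Hx0 : 0 < x0).
  { destruct (Rle_dec x0 0) as [Hle|]; [exfalso|lra].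
    assert (Hz : forall t, (t < T)%nat -> a t = 0).
    { intros t Ht. pose proof (Ha t Ht). pose proof (Hr t Ht).
      assert (a t * r t <= x0)
        by (apply (sumN_ge_term T (fun t => a t * r t)); auto;
            intros; apply Rmult_le_pos; auto; left; auto).
      nra. }
    rewrite (sumN_eq0 T a Hz) in Hs. lra. }
  apply Rle_trans with (sumN T (fun t => a t * ln x0 + (a t * r t - x0 * a t) / x0)).
  - apply sumN_le. intros t Ht. pose proof (Ha t Ht).
    pose proof (ln_le_minus_1 (r t / x0) ltac:(apply Rdiv_lt_0_compat; auto)) as Hl.
    rewrite ln_div in Hl by auto.
    replace ((a t * r t - x0 * a t) / x0) with (a t * (r t / x0 - 1)) by (field; lra).
    nra.
  - right. unfold Rdiv. rewrite sumN_plus, sumN_scal_r, sumN_scal_r, sumN_minus, sumN_scal_l, Hs.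
    fold x0. field. lra.
Qed.

(** * Hedge *)

Definition pos_simplex (k : nat) (w : nat -> R) : Prop :=
  (forall j, (j < k)%nat -> 0 < w j) /\ sumN k w = 1.

Lemma pos_simplex_in_simplex k p : pos_simplex k p -> in_simplex k p.
Proof. intros [Hp Hs]. split; [intros; left|]; auto. Qed.

Definition hedge_weights (k : nat) (g : R) (L : nat -> R) (j : nat) : R :=
  exp (- g * L j) / sumN k (fun i => exp (- g * L i)).

(* [F w] is the loss vector revealed after playing the weights [w]. *)
Fixpoint hedge_cumloss (k : nat) (g : R) (F : (nat -> R) -> nat -> R) (t : nat) : nat -> R :=
  match t with
  | O => fun _ => 0
  | S t => fun i => hedge_cumloss k g F t i + F (hedge_weights k g (hedge_cumloss k g F t)) i
  end.

Lemma hedge_weights_pos_simplex k g L : (1 <= k)%nat -> pos_simplex k (hedge_weights k g L).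
Proof.
  intros Hk. assert (0 < sumN k (fun i => exp (- g * L i)))
    by (apply sumN_pos; auto; intros; apply exp_pos).
  split.
  - intros. apply Rdiv_lt_0_compat; [apply exp_pos|auto].
  - unfold hedge_weights, Rdiv. rewrite sumN_scal_r. field. lra.
Qed.

Section Hedge.
Variables (k : nat) (g B : R) (F : (nat -> R) -> nat -> R).
Hypotheses (Hk : (1 <= k)%nat) (Hg : 0 < g)
  (HF : forall w, pos_simplex k w -> forall i, (i < k)%nat -> 0 <= F w i <= B).

Let W t := hedge_weights k g (hedge_cumloss k g F t).
Let potential t := sumN k (fun j => exp (- g * hedge_cumloss k g F t j)).
Let mixed_loss t := sumN k (fun j => W t j * F (W t) j).

Lemma hedge_cumloss_sum T i : hedge_cumloss k g F T i = sumN T (fun t => F (W t) i).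
Proof. induction T; simpl; auto. rewrite IHT. reflexivity. Qed.

Lemma hedge_potential_pos t : 0 < potential t.
Proof. apply sumN_pos; auto. intros; apply exp_pos. Qed.

Lemma hedge_potential_step t :
  potential (S t) <= potential t * exp (- g * mixed_loss t + g * g * (B * B)).
Proof.
  destruct (hedge_weights_pos_simplex k g (hedge_cumloss k g F t) Hk) as [HW HWs].
  fold (W t) in HW, HWs.
  assert (Hl : forall j, (j < k)%nat -> 0 <= F (W t) j <= B) by (intros; apply HF; [split|]; auto).
  pose proof (hedge_potential_pos t).
  assert (E : potential (S t) = potential t * sumN k (fun j => W t j * exp (- g * F (W t) j))).
  { unfold potential. simpl. rewrite <- sumN_scal_l. apply sumN_ext. intros j Hj.
    unfold W, hedge_weights. rewrite Rmult_plus_distr_l, exp_plus. field.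
    apply Rgt_not_eq, hedge_potential_pos. }
  rewrite E. apply Rmult_le_compat_l; [lra|].
  apply Rle_trans with (sumN k (fun j => W t j - g * (W t j * F (W t) j) + g * g * (B * B) * W t j)).
  - apply sumN_le. intros j Hj. pose proof (HW j Hj). pose proof (Hl j Hj).
    pose proof (exp_neg_le_quadratic (g * F (W t) j) ltac:(nra)) as Hq.
    replace (- (g * F (W t) j)) with (- g * F (W t) j) in Hq by ring.
    assert (F (W t) j * F (W t) j <= B * B) by nra.
    assert (W t j * (g * g * (F (W t) j * F (W t) j)) <= W t j * (g * g * (B * B)))
      by (apply Rmult_le_compat_l; [lra|]; apply Rmult_le_compat_l; nra).
    nra.
  - rewrite sumN_plus, sumN_minus, sumN_scal_l, sumN_scal_l, HWs. fold (mixed_loss t).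
    pose proof (exp_ineq1_le (- g * mixed_loss t + g * g * (B * B))). lra.
Qed.

Lemma hedge_potential_le T :
  potential T <= INR k * exp (- g * sumN T mixed_loss + INR T * (g * g * (B * B))).
Proof.
  induction T as [|T IH].
  - unfold potential. simpl. rewrite (sumN_ext k _ (fun _ => 1)).
    + rewrite sumN_const, Rmult_0_l, Rmult_0_r, Rplus_0_r, exp_0. lra.
    + intros. rewrite Rmult_0_r. apply exp_0.
  - eapply Rle_trans; [apply hedge_potential_step|].
    eapply Rle_trans; [apply Rmult_le_compat_r; [left; apply exp_pos|apply IH]|].
    rewrite Rmult_assoc, <- exp_plus. right. do 2 f_equal. simpl sumN. rewrite S_INR. ring.
Qed.

(* The potential dominates [exp (- g * cumulative loss of i)] for every expert [i]. *)
Lemma hedge_regret T i : (i < k)%nat ->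
  sumN T mixed_loss <= sumN T (fun t => F (W t) i) + ln (INR k) / g + INR T * g * (B * B).
Proof.
  intros Hi. rewrite <- hedge_cumloss_sum.
  assert (Hkpos : 0 < INR k) by (apply lt_0_INR; lia).
  assert (exp (- g * hedge_cumloss k g F T i) <= potential T)
    by (apply (sumN_ge_term k (fun j => exp (- g * hedge_cumloss k g F T j))); auto;
        intros; left; apply exp_pos).
  pose proof (hedge_potential_le T).
  assert (Hexp : exp (- g * hedge_cumloss k g F T i)
               <= exp (ln (INR k) + (- g * sumN T mixed_loss + INR T * (g * g * (B * B)))))
    by (rewrite exp_plus, exp_ln by auto; lra).
  assert (- g * hedge_cumloss k g F T i
          <= ln (INR k) + (- g * sumN T mixed_loss + INR T * (g * g * (B * B)))).
  { rewrite <- (ln_exp (- g * hedge_cumloss k g F T i)), <- (ln_exp (ln (INR k) + _)).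
    apply ln_le; [apply exp_pos|exact Hexp]. }
  apply Rmult_le_reg_l with g; auto.
  replace (g * (hedge_cumloss k g F T i + ln (INR k) / g + INR T * g * (B * B)))
    with (g * hedge_cumloss k g F T i + ln (INR k) + INR T * (g * g * (B * B))) by (field; lra).
  lra.
Qed.

End Hedge.

Lemma exists_rate_horizon a b eps : 0 <= a -> 0 < b -> 0 < eps ->
  exists g T, 0 < g /\ (1 <= T)%nat /\ a / (g * INR T) + g * b <= eps.
Proof.
  intros Ha Hb He. set (g := eps / (2 * b)).
  assert (Hg : 0 < g) by (unfold g; apply Rdiv_lt_0_compat; lra).
  assert (Hag : 0 <= a / g) by (apply Rmult_le_pos; auto; left; apply Rinv_0_lt_compat; auto).
  destruct (archimed_cor1 (eps / 2 / (a / g + 1))) as [T [HT HT0]].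
  { apply Rdiv_lt_0_compat; lra. }
  exists g, T. split; auto. split; [lia|].
  assert (HTp : 0 < INR T) by (apply lt_0_INR; lia).
  replace (g * b) with (eps / 2) by (unfold g; field; lra).
  replace (a / (g * INR T)) with (a / g * / INR T) by (field; lra).
  assert (a / g * / INR T <= (a / g + 1) * / INR T)
    by (apply Rmult_le_compat_r; [left; apply Rinv_0_lt_compat|]; lra).
  assert ((a / g + 1) * / INR T <= (a / g + 1) * (eps / 2 / (a / g + 1)))
    by (apply Rmult_le_compat_l; lra).
  replace ((a / g + 1) * (eps / 2 / (a / g + 1))) with (eps / 2) in * by (field; lra).
  lra.
Qed.

(* Hedge on the losses [B - G w], with rate and horizon balancing [ln k / (g T)] against
   [g B^2]. *)
Lemma no_regret k B (G : (nat -> R) -> nat -> R) eps :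
  (1 <= k)%nat -> 0 < B -> 0 < eps ->
  (forall w, pos_simplex k w -> forall i, (i < k)%nat -> 0 <= G w i <= B) ->
  exists T (W : nat -> nat -> R), (1 <= T)%nat /\ (forall t, pos_simplex k (W t)) /\
    forall i, (i < k)%nat ->
      sumN T (fun t => G (W t) i)
      <= sumN T (fun t => sumN k (fun j => W t j * G (W t) j)) + INR T * eps.
Proof.
  intros Hk HB He HG.
  assert (Hlnk : 0 <= ln (INR k)) by (rewrite <- ln_1; apply ln_le; [lra|apply (le_INR 1); auto]).
  destruct (exists_rate_horizon (ln (INR k)) (B * B) eps Hlnk ltac:(nra) He)
    as [g [T [Hg [HT Hgt]]]].
  set (F := fun w i => B - G w i).
  assert (HF : forall w, pos_simplex k w -> forall i, (i < k)%nat -> 0 <= F w i <= B)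
    by (intros w Hw i Hi; specialize (HG w Hw i Hi); unfold F; lra).
  set (W := fun t => hedge_weights k g (hedge_cumloss k g F t)).
  exists T, W. split; [exact HT|]. split; [intros; apply hedge_weights_pos_simplex; auto|].
  intros i Hi. pose proof (hedge_regret k g B F Hk Hg HF T i Hi) as Hr. fold W in Hr.
  assert (Hmix : forall t, sumN k (fun j => W t j * F (W t) j)
                           = B - sumN k (fun j => W t j * G (W t) j)).
  { intros t. destruct (hedge_weights_pos_simplex k g (hedge_cumloss k g F t) Hk) as [_ Hs].
    unfold F. rewrite (sumN_ext k _ (fun j => B * W t j - W t j * G (W t) j)) by (intros; ring).
    rewrite sumN_minus, sumN_scal_l. fold (W t) in Hs. rewrite Hs. ring. }
  rewrite (sumN_ext T _ _ (fun t _ => Hmix t)) in Hr. unfold F in Hr.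
  rewrite !sumN_minus, sumN_const in Hr.
  assert (HTp : 0 < INR T) by (apply lt_0_INR; lia).
  assert (ln (INR k) / g + INR T * g * (B * B) <= INR T * eps).
  { replace (ln (INR k) / g + INR T * g * (B * B))
      with (INR T * (ln (INR k) / (g * INR T) + g * (B * B))) by (field; lra).
    apply Rmult_le_compat_l; lra. }
  lra.
Qed.

(** * Weak duality *)

Lemma entry_bounds N M (Q : nat -> nat -> R) n m : in_simplex_mat N M Q ->
  (n < N)%nat -> (m < M)%nat -> 0 <= Q n m <= 1.
Proof.
  intros HQ Hn Hm. destruct (HQ n Hn) as [H0 Hs]. split; [apply H0; auto|].
  rewrite <- Hs. apply (sumN_ge_term M (Q n)); auto.
Qed.

Lemma sumN_row_weights N M (a : nat -> R) (Q : nat -> nat -> R) : in_simplex_mat N M Q ->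
  sumN N (fun n => sumN M (fun m => a n * Q n m)) = sumN N a.
Proof.
  intros HQ. apply sumN_ext. intros n Hn. rewrite sumN_scal_l. destruct (HQ n Hn) as [_ ->]. ring.
Qed.

Definition output (N : nat) (p : nat -> R) (Q : nat -> nat -> R) (m : nat) : R :=
  sumN N (fun l => p l * Q l m).

Lemma output_ge_term N M p Q n m : in_simplex N p -> in_simplex_mat N M Q ->
  (n < N)%nat -> (m < M)%nat -> p n * Q n m <= output N p Q m.
Proof.
  intros [Hp _] HQ Hn Hm. apply (sumN_ge_term N (fun l => p l * Q l m)); auto.
  intros l Hl. apply Rmult_le_pos; [apply Hp; auto|apply (entry_bounds N M Q); auto].
Qed.

Lemma output_nonneg N M p Q m : in_simplex N p -> in_simplex_mat N M Q -> (m < M)%nat ->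
  0 <= output N p Q m.
Proof.
  intros Hp HQ Hm. apply sumN_nonneg. intros l Hl.
  apply Rmult_le_pos; [apply Hp; auto|apply (entry_bounds N M Q); auto].
Qed.

Lemma output_sum N M p Q : in_simplex N p -> in_simplex_mat N M Q -> sumN M (output N p Q) = 1.
Proof.
  intros [_ Hs] HQ. unfold output. rewrite <- sumN_swap, sumN_row_weights; auto.
Qed.

Definition mi_term (p Q q : R) : R := if Req_EM_T (p * Q) 0 then 0 else p * Q * ln (Q / q).

Lemma mutual_info_terms N M p Q : mutual_info N M p Q =
  sumN N (fun n => sumN M (fun m => mi_term (p n) (Q n m) (output N p Q m))).
Proof. reflexivity. Qed.

(* Pointwise form of [ln y <= y - 1] at [y = q exp (a / p) / Q]; the case [p = 0] is where
   the convention on [persp_term] enters. *)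
Lemma mi_term_ge_persp p Q q a : 0 <= p -> 0 <= Q -> p * Q <= q -> (p = 0 -> a <= 0) ->
  p * Q - q * persp_term p a <= mi_term p Q q - Q * a.
Proof.
  intros Hp HQ Hq Ha. unfold mi_term, persp_term.
  destruct (Rlt_dec 0 p) as [Hp'|Hp'].
  - destruct (Req_EM_T (p * Q) 0) as [E|E].
    + assert (Q = 0) by (apply Rmult_integral in E; destruct E; lra). subst.
      assert (0 <= q * (p * exp (a / p)))
        by (apply Rmult_le_pos; [lra|]; apply Rmult_le_pos; [lra|left; apply exp_pos]).
      lra.
    + assert (HQ' : 0 < Q) by (destruct HQ; auto; subst; lra).
      assert (Hpq : 0 < p * Q) by (apply Rmult_lt_0_compat; auto).
      set (y := q * exp (a / p) / Q).
      assert (Hy : 0 < y)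
        by (unfold y; apply Rdiv_lt_0_compat; auto; apply Rmult_lt_0_compat; [lra|apply exp_pos]).
      assert (Hq' : 0 < q) by lra. pose proof (exp_pos (a / p)).
      assert (Ey : ln y = ln q + a / p - ln Q).
      { unfold y. rewrite ln_div, ln_mult, ln_exp; auto. apply Rmult_lt_0_compat; auto. }
      pose proof (ln_le_minus_1 y Hy).
      assert (Hm : p * Q * (1 - y) <= p * Q * (- ln y)) by (apply Rmult_le_compat_l; lra).
      rewrite Ey in Hm. rewrite ln_div by lra.
      replace (p * Q * (1 - y)) with (p * Q - q * (p * exp (a / p))) in Hm
        by (unfold y; field; lra).
      replace (p * Q * - (ln q + a / p - ln Q)) with (p * Q * (ln Q - ln q) - Q * a) in Hm
        by (field; lra).
      lra.
  - assert (p = 0) by lra. subst. rewrite Rmult_0_l.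
    destruct (Req_EM_T 0 0); [|lra]. specialize (Ha eq_refl). nra.
Qed.

Lemma mi_term_split p Q q v lZ : 0 <= p -> 0 <= Q -> p * Q <= q ->
  mi_term p Q q + p * Q * (ln q - (v - lZ)) = p * (xlnx Q - Q * v) + p * Q * lZ.
Proof.
  intros Hp HQ Hq. unfold mi_term. destruct (Req_EM_T (p * Q) 0) as [E|E].
  - rewrite E. apply Rmult_integral in E. destruct E as [->| ->]; [ring|rewrite xlnx_0; ring].
  - assert (0 < Q) by (destruct HQ; auto; subst; exfalso; apply E; ring).
    assert (0 < p) by (destruct Hp; auto; subst; exfalso; apply E; ring).
    assert (0 < q) by (assert (0 < p * Q) by (apply Rmult_lt_0_compat; auto); lra).
    rewrite xlnx_pos, ln_div by auto. ring.
Qed.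

Lemma P_objective_le_mutual_info N M p lam V Q :
  P_feasible N M p lam V -> in_simplex_mat N M Q ->
  sumN N lam - frob N M V Q <= mutual_info N M p Q.
Proof.
  intros [Hp HF] HQ.
  assert (Hgap : 0 <= sumN M (fun m =>
            output N p Q m * (1 - sumN N (fun n => persp_term (p n) (lam n - V n m))))).
  { apply sumN_nonneg. intros m Hm. destruct (HF m Hm) as [_ H].
    apply Rmult_le_pos; [apply (output_nonneg N M); auto|lra]. }
  assert (Hterm : sumN M (fun m =>
            output N p Q m * (1 - sumN N (fun n => persp_term (p n) (lam n - V n m))))
          <= sumN N (fun n => sumN M (fun m =>
               mi_term (p n) (Q n m) (output N p Q m) - Q n m * (lam n - V n m)))).
  { apply Rle_trans with (sumN N (fun n => sumN M (fun m =>
      p n * Q n m - output N p Q m * persp_term (p n) (lam n - V n m)))).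
    - rewrite sumN_swap. right. apply sumN_ext. intros m Hm.
      rewrite sumN_minus, sumN_scal_l. unfold output. ring.
    - apply sumN2_le. intros n m Hn Hm. apply mi_term_ge_persp.
      + destruct Hp as [Hp _]. apply Hp; auto.
      + apply (entry_bounds N M Q); auto.
      + apply (output_ge_term N M); auto.
      + intros E. destruct (HF m Hm) as [H _]. specialize (H n Hn E). lra. }
  rewrite (sumN2_ext N M _ (fun n m => mi_term (p n) (Q n m) (output N p Q m)
                                     + V n m * Q n m - lam n * Q n m)) in Hterm
    by (intros; ring).
  rewrite sumN2_minus, sumN2_plus, (sumN_row_weights N M lam Q HQ) in Hterm.
  rewrite mutual_info_terms. unfold frob. lra.
Qed.

(* Weak duality for (D): the output distribution of [p] is compared with the softmax of [v]
   (Gibbs), and the row average over [p] with the maximum over rows. *)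
Lemma mutual_info_le_D_obj N M p Q v : (1 <= M)%nat -> in_simplex N p -> in_simplex_mat N M Q ->
  mutual_info N M p Q <= D_obj N M v Q.
Proof.
  intros HM Hp HQ. pose proof Hp as [Hp0 Hps].
  set (Z := sumN M (fun m => exp (v m))).
  assert (HZ : 0 < Z) by (apply sumN_pos; auto; intros; apply exp_pos).
  set (q := output N p Q).
  set (row := fun n => sumN M (fun m => xlnx (Q n m) - Q n m * v m)).
  assert (Hrow : ln Z + sumN N (fun n => p n * row n) <= D_obj N M v Q)
    by (apply Rplus_le_compat_l, maxN_ge_average; auto).
  assert (Hrows : ln Z + sumN N (fun n => p n * row n) =
            sumN N (fun n => sumN M (fun m =>
              p n * (xlnx (Q n m) - Q n m * v m) + (p n * ln Z) * Q n m))).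
  { rewrite sumN2_plus.
    replace (sumN N (fun n => sumN M (fun m => p n * ln Z * Q n m))) with (ln Z)
      by (rewrite (sumN_row_weights N M (fun n => p n * ln Z) Q HQ), sumN_scal_r, Hps; ring).
    unfold row. rewrite (sumN_ext N _ _ (fun n _ => eq_sym (sumN_scal_l M (p n) _))). ring. }
  assert (Hsplit : sumN N (fun n => sumN M (fun m =>
              p n * (xlnx (Q n m) - Q n m * v m) + (p n * ln Z) * Q n m)) =
            mutual_info N M p Q + sumN M (fun m => q m * (ln (q m) - (v m - ln Z)))).
  { rewrite <- (sumN2_ext N M (fun n m => mi_term (p n) (Q n m) (q m)
                                          + p n * Q n m * (ln (q m) - (v m - ln Z)))).
    - rewrite sumN2_plus, mutual_info_terms. f_equal.
      rewrite sumN_swap. apply sumN_ext. intros m Hm. rewrite sumN_scal_r. reflexivity.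
    - intros n m Hn Hm. rewrite mi_term_split.
      + ring.
      + apply Hp0; auto.
      + apply (entry_bounds N M Q); auto.
      + apply (output_ge_term N M); auto. }
  assert (Hgibbs : 0 <= sumN M (fun m => q m * (ln (q m) - (v m - ln Z)))).
  { apply Rle_trans with (sumN M (fun m => q m - exp (v m) / Z)).
    - rewrite sumN_minus. unfold Rdiv. rewrite sumN_scal_r. fold Z.
      unfold q. rewrite output_sum by auto. field_simplify; lra.
    - apply sumN_le. intros m Hm. replace (v m - ln Z) with (ln (exp (v m) / Z))
        by (rewrite ln_div, ln_exp by (auto; apply exp_pos); reflexivity).
      apply gibbs_term; [apply (output_nonneg N M); auto|].
      apply Rdiv_lt_0_compat; [apply exp_pos|auto]. }
  lra.
Qed.

(** * Bounded feasible multipliers *)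

(* The bound [|V n m| <= p n * B] makes [frob V] uniformly Lipschitz, so that a finite net
   of channels suffices. *)
Definition bounded_feasible N M B (p : nat -> R) (V : nat -> nat -> R) : Prop :=
  pos_simplex N p /\
  (forall n m, (n < N)%nat -> (m < M)%nat -> Rabs (V n m) <= p n * B) /\
  (forall m, (m < M)%nat -> sumN N (fun n => p n * exp (- V n m / p n)) <= 1).

Lemma bounded_feasible_P_feasible N M B p V :
  bounded_feasible N M B p V -> P_feasible N M p (fun _ => 0) V.
Proof.
  intros [[Hp Hs] [_ Hc]]. split; [split; [intros; left; auto|auto]|].
  intros m Hm. split.
  - intros n Hn E. specialize (Hp n Hn). lra.
  - rewrite <- (Hc m Hm). right. apply sumN_ext. intros n Hn. unfold persp_term.
    destruct (Rlt_dec 0 (p n)); [|specialize (Hp n Hn); lra]. do 3 f_equal. ring.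
Qed.

Definition entrywise_close N M d (Q Q' : nat -> nat -> R) : Prop :=
  forall n m, (n < N)%nat -> (m < M)%nat -> Rabs (Q n m - Q' n m) <= d.

Lemma frob_lipschitz N M B p V Q Q' d : bounded_feasible N M B p V -> 0 <= B ->
  entrywise_close N M d Q Q' ->
  Rabs (frob N M V Q - frob N M V Q') <= B * INR M * d.
Proof.
  intros [[Hp Hs] [Hb _]] HB HQ. unfold frob. rewrite <- sumN2_minus.
  eapply Rle_trans; [apply sumN_abs|].
  apply Rle_trans with (sumN N (fun n => p n * (B * INR M * d))).
  - apply sumN_le. intros n Hn. eapply Rle_trans; [apply sumN_abs|].
    replace (p n * (B * INR M * d)) with (INR M * ((p n * B) * d)) by ring.
    rewrite <- sumN_const. apply sumN_le. intros m Hm.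
    replace (V n m * Q n m - V n m * Q' n m) with (V n m * (Q n m - Q' n m)) by ring.
    rewrite Rabs_mult.
    apply Rmult_le_compat; auto using Rabs_pos.
  - rewrite sumN_scal_r, Hs. lra.
Qed.

Lemma frob_bound N M B p V Q : bounded_feasible N M B p V -> in_simplex_mat N M Q ->
  Rabs (frob N M V Q) <= B.
Proof.
  intros [[Hp Hs] [Hb _]] HQ. unfold frob.
  eapply Rle_trans; [apply sumN_abs|].
  apply Rle_trans with (sumN N (fun n => sumN M (fun m => (p n * B) * Q n m))).
  - apply sumN_le. intros n Hn. eapply Rle_trans; [apply sumN_abs|].
    apply sumN_le. intros m Hm. pose proof (entry_bounds N M Q n m HQ Hn Hm).
    rewrite Rabs_mult, (Rabs_right (Q n m)) by lra.
    apply Rmult_le_compat_r; [lra|auto].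
  - rewrite sumN_row_weights, sumN_scal_r, Hs by auto. lra.
Qed.

Definition average T (x : nat -> nat -> R) (n : nat) : R := sumN T (fun t => x t n) / INR T.

Lemma average_pos T x n : (1 <= T)%nat -> (forall t, (t < T)%nat -> 0 < x t n) ->
  0 < average T x n.
Proof. intros HT Hx. apply Rdiv_lt_0_compat; [apply sumN_pos; auto|apply lt_0_INR; lia]. Qed.

Lemma average_sum K T x : (1 <= T)%nat -> (forall t, (t < T)%nat -> sumN K (x t) = 1) ->
  sumN K (average T x) = 1.
Proof.
  intros HT Hx. assert (0 < INR T) by (apply lt_0_INR; lia).
  unfold average, Rdiv. rewrite sumN_scal_r, <- sumN_swap.
  rewrite (sumN_ext T _ (fun _ => 1)), sumN_const by auto. field. lra.
Qed.

Definition average_mat T (W : nat -> nat -> nat -> R) (n m : nat) : R :=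
  sumN T (fun t => W t n m) / INR T.

Lemma frob_average_mat N M T W Q : (1 <= T)%nat ->
  frob N M (average_mat T W) Q = sumN T (fun t => frob N M (W t) Q) / INR T.
Proof.
  intros HT. unfold frob, average_mat, Rdiv. rewrite <- sumN_scal_r.
  transitivity (sumN N (fun n => sumN T (fun t => sumN M (fun m => W t n m * Q n m * / INR T)))).
  - apply sumN_ext. intros n Hn. rewrite <- sumN_swap. apply sumN_ext. intros m Hm.
    rewrite !sumN_scal_r. ring.
  - rewrite sumN_swap. apply sumN_ext. intros t Ht. rewrite <- sumN_scal_r.
    apply sumN_ext. intros n Hn. rewrite <- sumN_scal_r. reflexivity.
Qed.

(* The constraint of (P) is jointly convex in [(p, V)] (perspective of [exp]), hence
   preserved by averaging. *)
Lemma bounded_feasible_average N M B T P W : (1 <= T)%nat ->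
  (forall t, (t < T)%nat -> bounded_feasible N M B (P t) (W t)) ->
  bounded_feasible N M B (average T P) (average_mat T W).
Proof.
  intros HT HK. assert (HTp : 0 < INR T) by (apply lt_0_INR; lia).
  assert (Hpos : forall t n, (t < T)%nat -> (n < N)%nat -> 0 < P t n)
    by (intros t n Ht Hn; destruct (HK t Ht) as [[H _] _]; auto).
  split; [split|split]; unfold average_mat.
  - intros n Hn. apply average_pos; auto.
  - apply average_sum; auto. intros t Ht. apply (HK t Ht).
  - intros n m Hn Hm. unfold average, Rdiv.
    rewrite Rabs_mult, (Rabs_right (/ INR T)) by (left; apply Rinv_0_lt_compat; auto).
    rewrite Rmult_assoc, (Rmult_comm (/ INR T)), <- Rmult_assoc, <- sumN_scal_r.
    apply Rmult_le_compat_r; [left; apply Rinv_0_lt_compat; auto|].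
    eapply Rle_trans; [apply sumN_abs|]. apply sumN_le. intros t Ht. apply (HK t Ht); auto.
  - intros m Hm. unfold average.
    apply Rle_trans with (sumN N (fun n =>
      sumN T (fun t => P t n * exp (- W t n m / P t n)) / INR T)).
    + apply sumN_le. intros n Hn.
      pose proof (exp_jensen T (fun t => P t n) (fun t => - W t n m / P t n) HT
                    (fun t Ht => Hpos t n Ht Hn)) as J. cbv beta in J.
      assert (HS : 0 < sumN T (fun t => P t n)) by (apply sumN_pos; auto).
      rewrite (sumN_ext T (fun t => P t n * (- W t n m / P t n)) (fun t => - W t n m)),
        sumN_opp in J
        by (intros t Ht; specialize (Hpos t n Ht Hn); field; lra).
      replace (- (sumN T (fun t => W t n m) / INR T) / (sumN T (fun t => P t n) / INR T))
        with (- sumN T (fun t => W t n m) / sumN T (fun t => P t n)) by (field; lra).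
      unfold Rdiv at 1 3. rewrite Rmult_assoc, (Rmult_comm (/ INR T)), <- Rmult_assoc.
      apply Rmult_le_compat_r; [left; apply Rinv_0_lt_compat; auto|].
      exact J.
    + unfold Rdiv. rewrite sumN_scal_r, <- sumN_swap.
      rewrite <- (Rinv_r (INR T)) by lra. apply Rmult_le_compat_r; [left; apply Rinv_0_lt_compat; auto|].
      rewrite <- (Rmult_1_r (INR T)), <- sumN_const. apply sumN_le. intros t Ht.
      apply (HK t Ht); auto.
Qed.

(** * Response to a single channel *)

Definition kl_row (M : nat) (Q : nat -> nat -> R) (r : nat -> R) (n : nat) : R :=
  sumN M (fun m => xlnx (Q n m) - Q n m * ln (r m)).

Lemma D_obj_ln N M Q r : (forall m, (m < M)%nat -> 0 < r m) -> sumN M r = 1 ->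
  D_obj N M (fun m => ln (r m)) Q = maxN N (kl_row M Q r).
Proof.
  intros Hr Hs. unfold D_obj. rewrite (sumN_ext M _ r) by (intros; apply exp_ln; auto).
  rewrite Hs, ln_1, Rplus_0_l. reflexivity.
Qed.

Lemma kl_row_average_le N M Q T (r : nat -> nat -> R) n :
  in_simplex_mat N M Q -> (n < N)%nat -> (1 <= T)%nat ->
  (forall t m, (t < T)%nat -> (m < M)%nat -> 0 < r t m) ->
  kl_row M Q (average T r) n <= sumN T (fun t => kl_row M Q (r t) n) / INR T.
Proof.
  intros HQ Hn HT Hr. assert (HTp : 0 < INR T) by (apply lt_0_INR; lia).
  unfold kl_row.
  apply Rle_trans with
    (sumN M (fun m => xlnx (Q n m) - Q n m * sumN T (fun t => / INR T * ln (r t m)))).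
  - apply sumN_le. intros m Hm.
    apply Rplus_le_compat_l, Ropp_le_contravar, Rmult_le_compat_l;
      [apply (entry_bounds N M Q); auto|].
    unfold average, Rdiv. rewrite Rmult_comm, <- sumN_scal_l. apply ln_jensen.
    + intros; left; apply Rinv_0_lt_compat; auto.
    + rewrite sumN_const. field. lra.
    + intros; auto.
  - right.
    transitivity (sumN M (fun m => sumN T (fun t => (xlnx (Q n m) - Q n m * ln (r t m)) * / INR T))).
    + apply sumN_ext. intros m Hm.
      rewrite sumN_scal_r, sumN_minus, sumN_const, sumN_scal_l, sumN_scal_l. field. lra.
    + rewrite sumN_swap. unfold Rdiv. rewrite <- sumN_scal_r.
      apply sumN_ext. intros t Ht. rewrite sumN_scal_r. reflexivity.
Qed.

(* Mixing in [eta] of the uniform distribution keeps every entry and output probability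
   above [eta / M], which bounds all logarithms in the construction below. *)
Definition smooth (M : nat) (eta : R) (Q : nat -> nat -> R) (n m : nat) : R :=
  (1 - eta) * Q n m + eta / INR M.

Definition smoothing_bound (M : nat) (eta : R) : R := - ln (eta / INR M).

(* [exp (- V n m / p n)] is the ratio of the smoothed channel to its output, so that the
   constraint of (P) holds with equality. *)
Definition tangent_V N M eta Q (p : nat -> R) (n m : nat) : R :=
  - p n * ln (smooth M eta Q n m / output N p (smooth M eta Q) m).

Section Smoothing.
Variables (N M : nat) (eta : R) (Q : nat -> nat -> R).
Hypotheses (HM : (1 <= M)%nat) (Heta : 0 < eta < 1) (HQ : in_simplex_mat N M Q).

Let e := eta / INR M.
Let B := smoothing_bound M eta.
Let r p := output N p (smooth M eta Q).

Lemma smooth_floor : 0 < e <= eta.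
Proof.
  assert (1 <= INR M) by (apply (le_INR 1); auto). unfold e. split.
  - apply Rdiv_lt_0_compat; lra.
  - unfold Rdiv. rewrite <- (Rmult_1_r eta) at 2. apply Rmult_le_compat_l; [lra|].
    rewrite <- Rinv_1. apply Rinv_le_contravar; lra.
Qed.

Lemma smoothing_bound_pos : 0 < B.
Proof.
  pose proof smooth_floor. unfold B, smoothing_bound. fold e.
  assert (ln e < 0) by (rewrite <- ln_1; apply ln_increasing; lra). lra.
Qed.

Lemma ln_between_floor_1 x : e <= x <= 1 -> - B <= ln x <= 0.
Proof.
  intros Hx. pose proof smooth_floor. unfold B, smoothing_bound. fold e.
  rewrite Ropp_involutive. split; [|rewrite <- ln_1]; apply ln_le; lra.
Qed.

Lemma smooth_bounds n m : (n < N)%nat -> (m < M)%nat -> e <= smooth M eta Q n m <= 1.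
Proof.
  intros Hn Hm. pose proof (entry_bounds N M Q n m HQ Hn Hm). pose proof smooth_floor.
  unfold smooth. fold e. nra.
Qed.

Lemma smooth_in_simplex_mat : in_simplex_mat N M (smooth M eta Q).
Proof.
  intros n Hn. split.
  - intros m Hm. pose proof (smooth_bounds n m Hn Hm). pose proof smooth_floor. lra.
  - unfold smooth. rewrite sumN_plus, sumN_scal_l, sumN_const.
    destruct (HQ n Hn) as [_ ->]. field. apply Rgt_not_eq, lt_0_INR. lia.
Qed.

Lemma smooth_output_bounds p m : pos_simplex N p -> (m < M)%nat -> e <= r p m <= 1.
Proof.
  intros [Hp Hs] Hm. unfold r, output. split.
  - apply Rle_trans with (sumN N (fun l => p l * e)); [rewrite sumN_scal_r, Hs; lra|].
    apply sumN_le. intros l Hl. apply Rmult_le_compat_l; [left; auto|apply smooth_bounds; auto].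
  - apply Rle_trans with (sumN N (fun l => p l * 1)); [|rewrite sumN_scal_r, Hs; lra].
    apply sumN_le. intros l Hl. apply Rmult_le_compat_l; [left; auto|apply smooth_bounds; auto].
Qed.

Lemma smooth_output_sum p : pos_simplex N p -> sumN M (r p) = 1.
Proof.
  intros Hp. apply (output_sum N M); [apply pos_simplex_in_simplex|apply smooth_in_simplex_mat]; auto.
Qed.

Lemma tangent_bounded_feasible p : pos_simplex N p -> bounded_feasible N M B p (tangent_V N M eta Q p).
Proof.
  intros Hps. pose proof Hps as [Hp Hs]. split; [auto|split].
  - intros n m Hn Hm. unfold tangent_V. fold (r p).
    pose proof (smooth_bounds n m Hn Hm) as Hs_nm. pose proof (smooth_output_bounds p m Hps Hm) as Hr_m.
    pose proof smooth_floor. rewrite ln_div by lra.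
    pose proof (ln_between_floor_1 _ Hs_nm). pose proof (ln_between_floor_1 _ Hr_m).
    rewrite Rabs_mult, Rabs_Ropp, (Rabs_right (p n)) by (apply Rle_ge; left; auto).
    apply Rmult_le_compat_l; [left; auto|]. unfold Rabs. destruct (Rcase_abs _); lra.
  - intros m Hm. pose proof (smooth_output_bounds p m Hps Hm). pose proof smooth_floor.
    right. transitivity (sumN N (fun n => p n * smooth M eta Q n m * / r p m)).
    2:{ rewrite sumN_scal_r. change (r p m * / r p m = 1). field. lra. }
    apply sumN_ext. intros n Hn. pose proof (smooth_bounds n m Hn Hm). specialize (Hp n Hn).
    unfold tangent_V. fold (r p).
    replace (- (- p n * ln (smooth M eta Q n m / r p m)) / p n)
      with (ln (smooth M eta Q n m / r p m)) by (field; lra).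
    rewrite exp_ln by (apply Rdiv_lt_0_compat; lra). unfold Rdiv. ring.
Qed.

Lemma kl_row_bounds p : pos_simplex N p ->
  forall n, (n < N)%nat -> 0 <= kl_row M Q (r p) n <= B.
Proof.
  intros Hps n Hn. unfold kl_row. destruct (HQ n Hn) as [_ Hrow]. split.
  - apply Rle_trans with (sumN M (fun m => Q n m - r p m)).
    + rewrite sumN_minus, smooth_output_sum, Hrow by auto. lra.
    + apply sumN_le. intros m Hm. apply xlnx_gibbs; [apply (entry_bounds N M Q); auto|].
      pose proof (smooth_output_bounds p m Hps Hm). pose proof smooth_floor. lra.
  - apply Rle_trans with (sumN M (fun m => Q n m * B)); [|rewrite sumN_scal_r, Hrow; lra].
    apply sumN_le. intros m Hm. pose proof (entry_bounds N M Q n m HQ Hn Hm) as HQnm.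
    pose proof (xlnx_le_0 _ HQnm).
    pose proof (ln_between_floor_1 _ (smooth_output_bounds p m Hps Hm)). nra.
Qed.

(* The loss in [- frob V Q] from smoothing is at most [- ln (1 - eta)], since
   [ln (smooth Q) >= ln (1 - eta) + ln Q]. *)
Lemma tangent_gap p : pos_simplex N p ->
  sumN N (fun j => p j * kl_row M Q (r p) j) + ln (1 - eta)
  <= - frob N M (tangent_V N M eta Q p) Q.
Proof.
  intros Hps. pose proof Hps as [Hp Hs].
  assert (E : sumN N (fun j => p j * kl_row M Q (r p) j) + frob N M (tangent_V N M eta Q p) Q =
     sumN N (fun n => sumN M (fun m => p n * (xlnx (Q n m) - Q n m * ln (smooth M eta Q n m))))).
  { unfold frob, kl_row. rewrite <- sumN_plus. apply sumN_ext. intros n Hn.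
    rewrite <- sumN_scal_l, <- sumN_plus. apply sumN_ext. intros m Hm. unfold tangent_V. fold (r p).
    pose proof (smooth_bounds n m Hn Hm). pose proof (smooth_output_bounds p m Hps Hm).
    pose proof smooth_floor. rewrite ln_div by lra. ring. }
  assert (Hle : sumN N (fun n => sumN M (fun m => p n * (xlnx (Q n m) - Q n m * ln (smooth M eta Q n m))))
                <= sumN N (fun n => sumN M (fun m => (p n * - ln (1 - eta)) * Q n m))).
  { apply sumN2_le. intros n m Hn Hm. pose proof (Hp n Hn).
    pose proof (entry_bounds N M Q n m HQ Hn Hm). pose proof smooth_floor.
    destruct (Req_dec (Q n m) 0) as [E0|E0]; [rewrite E0, xlnx_0; lra|].
    rewrite xlnx_pos by lra.
    assert (Hln : ln ((1 - eta) * Q n m) <= ln (smooth M eta Q n m))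
      by (apply ln_le; [apply Rmult_lt_0_compat|unfold smooth; fold e]; lra).
    rewrite ln_mult in Hln by lra.
    assert (Q n m * ln (Q n m) - Q n m * ln (smooth M eta Q n m) <= Q n m * - ln (1 - eta))
      by (rewrite <- Rmult_minus_distr_l; apply Rmult_le_compat_l; lra).
    replace (p n * - ln (1 - eta) * Q n m) with (p n * (Q n m * - ln (1 - eta))) by ring.
    apply Rmult_le_compat_l; lra. }
  pose proof (sumN_row_weights N M (fun n => p n * - ln (1 - eta)) Q HQ) as Hw. cbv beta in Hw.
  rewrite Hw, sumN_scal_r, Hs in Hle. lra.
Qed.

End Smoothing.

(* Hedge over the rows [n] with gains [kl_row] against the output of the smoothed channel;
   the averaged output [r] gives the test point [v = ln r] for (D), and the tangent
   multipliers of the played weights average to the response. *)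
Lemma bounded_feasible_response N M eta c eps Q :
  (1 <= N)%nat -> (1 <= M)%nat -> 0 < eta < 1 -> 0 < eps -> in_simplex_mat N M Q ->
  (forall v, c <= D_obj N M v Q) ->
  exists p V, bounded_feasible N M (smoothing_bound M eta) p V /\
    c - eps + ln (1 - eta) <= - frob N M V Q.
Proof.
  intros HN HM Heta Heps HQ Hc.
  set (B := smoothing_bound M eta).
  set (r := fun w => output N w (smooth M eta Q)).
  destruct (no_regret N B (fun w => kl_row M Q (r w)) eps HN
              (smoothing_bound_pos M eta HM Heta) Heps (kl_row_bounds N M eta Q HM Heta HQ))
    as [T [W [HT [HW Hreg]]]].
  assert (HTp : 0 < INR T) by (apply lt_0_INR; lia).
  set (rt := fun t => r (W t)).
  assert (Hrt : forall t m, (t < T)%nat -> (m < M)%nat -> 0 < rt t m).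
  { intros t m Ht Hm. pose proof (smooth_output_bounds N M eta Q HM Heta HQ (W t) m (HW t) Hm).
    pose proof (smooth_floor M eta HM Heta). unfold rt, r. lra. }
  assert (Hrsum : sumN M (average T rt) = 1)
    by (apply average_sum; auto; intros; apply smooth_output_sum; auto).
  destruct (maxN_attained N (kl_row M Q (average T rt)) HN) as [ns [Hns Ens]].
  assert (Hcns : c <= kl_row M Q (average T rt) ns).
  { rewrite <- Ens, <- D_obj_ln; auto. intros m Hm. apply average_pos; auto. }
  pose proof (kl_row_average_le N M Q T rt ns HQ Hns HT Hrt) as Hjensen.
  pose proof (Hreg ns Hns) as Hregret.
  set (Vt := fun t => tangent_V N M eta Q (W t)).
  assert (Hgap : sumN T (fun t => sumN N (fun j => W t j * kl_row M Q (r (W t)) j))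
                 + INR T * ln (1 - eta) <= - sumN T (fun t => frob N M (Vt t) Q)).
  { rewrite <- sumN_const, <- sumN_plus, <- sumN_opp. apply sumN_le. intros t Ht.
    apply (tangent_gap N M eta Q HM Heta HQ (W t) (HW t)). }
  exists (average T W), (average_mat T Vt). split.
  - apply bounded_feasible_average; auto. intros t Ht. apply tangent_bounded_feasible; auto.
  - rewrite frob_average_mat by auto.
    apply Rmult_le_reg_l with (INR T); auto.
    replace (INR T * - (sumN T (fun t => frob N M (Vt t) Q) / INR T))
      with (- sumN T (fun t => frob N M (Vt t) Q)) by (field; lra).
    assert (c * INR T <= sumN T (fun t => kl_row M Q (rt t) ns)).
    { apply Rle_trans with (kl_row M Q (average T rt) ns * INR T).
      - apply Rmult_le_compat_r; lra.
      - apply Rmult_le_reg_r with (/ INR T); [apply Rinv_0_lt_compat; auto|].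
        rewrite Rmult_assoc, Rinv_r by lra. lra. }
    unfold rt in *. lra.
Qed.

(** * Response to a compact convex set of channels *)

Lemma eventually_forall_lt A (P : nat -> nat -> Prop) :
  (forall a, (a < A)%nat -> exists K, forall k, (K <= k)%nat -> P a k) ->
  exists K, forall k, (K <= k)%nat -> forall a, (a < A)%nat -> P a k.
Proof.
  induction A as [|A IH]; intros H; [exists 0%nat; intros; lia|].
  destruct IH as [K1 HK1]; [intros a Ha; apply H; lia|].
  destruct (H A ltac:(lia)) as [K2 HK2].
  exists (K1 + K2)%nat. intros k Hk a Ha. destruct (Nat.eq_dec a A) as [->|].
  - apply HK2. lia.
  - apply HK1; lia.
Qed.

(* Prefixes [0 .. j-1] of the greedy sequence [u j := next j (greedy_prefix next j)]. *)
Fixpoint greedy_prefix {X : Type} (next : nat -> (nat -> X) -> X) (x0 : X) (j : nat) : nat -> X :=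
  match j with
  | O => fun _ => x0
  | S j' => fun i => if Nat.ltb i j' then greedy_prefix next x0 j' i
                     else next j' (greedy_prefix next x0 j')
  end.

Lemma greedy_prefix_spec {X : Type} (next : nat -> (nat -> X) -> X) x0 j i : (i < j)%nat ->
  greedy_prefix next x0 j i = next i (greedy_prefix next x0 i).
Proof.
  induction j as [|j IH]; intros Hi; [lia|]. simpl. destruct (Nat.ltb i j) eqn:E.
  - apply Nat.ltb_lt in E. auto.
  - apply Nat.ltb_ge in E. replace i with j by lia. reflexivity.
Qed.

(* Sequential compactness gives total boundedness: otherwise a greedy choice of points far
   from all previous ones yields a sequence without a convergent subsequence. *)
Lemma finite_net N M Qs d : 0 < d -> (exists Q, Qs Q) -> compact_set N M Qs ->
  exists k (F : nat -> nat -> nat -> R), (1 <= k)%nat /\ (forall i, (i < k)%nat -> Qs (F i)) /\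
    forall Q, Qs Q -> exists i, (i < k)%nat /\ entrywise_close N M d Q (F i).
Proof.
  intros Hd [Q0 HQ0] Hcomp.
  apply NNPP. intros Hnet.
  assert (Hfar : forall j f, exists Q, (forall i, (i < j)%nat -> Qs (f i)) ->
            Qs Q /\ forall i, (i < j)%nat -> ~ entrywise_close N M d Q (f i)).
  { intros j f. destruct (classic (forall i, (i < j)%nat -> Qs (f i))) as [Hf|Hf];
      [|exists Q0; tauto].
    apply NNPP. intros Hno. apply Hnet. exists (S j), (fun i => if Nat.ltb i j then f i else Q0).
    split; [lia|split].
    - intros i Hi. destruct (Nat.ltb i j) eqn:E; [apply Hf, Nat.ltb_lt; auto|auto].
    - intros Q HQ. apply NNPP. intros Hc. apply Hno. exists Q. intros _. split; auto.
      intros i Hi Hcl. apply Hc. exists i. split; [lia|].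
      apply Nat.ltb_lt in Hi. rewrite Hi. exact Hcl. }
  destruct (choice (fun (jf : nat * (nat -> nat -> nat -> R)) Q =>
              (forall i, (i < fst jf)%nat -> Qs (snd jf i)) ->
              Qs Q /\ forall i, (i < fst jf)%nat -> ~ entrywise_close N M d Q (snd jf i)))
    as [next Hnext]; [intros [j f]; apply Hfar|].
  set (nx := fun j f => next (j, f)).
  set (u := fun j => nx j (greedy_prefix nx Q0 j)).
  assert (Hu : forall j, Qs (u j) /\ forall i, (i < j)%nat -> ~ entrywise_close N M d (u j) (u i)).
  { intros j. induction j as [j IH] using (well_founded_induction Wf_nat.lt_wf).
    assert (Hpre : forall i, (i < j)%nat -> greedy_prefix nx Q0 j i = u i)
      by (intros; apply greedy_prefix_spec; auto).
    destruct (Hnext (j, greedy_prefix nx Q0 j)) as [HQ Hsep];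
      simpl; [intros i Hi; rewrite Hpre by auto; apply IH; auto|].
    split; [exact HQ|]. intros i Hi. rewrite <- (Hpre i Hi). apply Hsep; auto. }
  destruct (Hcomp u (fun k => proj1 (Hu k))) as [phi [Ql [Hphi [_ Hcv]]]].
  destruct (eventually_forall_lt N (fun n k => forall m, (m < M)%nat ->
              Rabs (u (phi k) n m - Ql n m) < d / 2)) as [K HK].
  { intros n Hn. apply eventually_forall_lt. intros m Hm.
    destruct (Hcv n m Hn Hm (d / 2) ltac:(lra)) as [K HK]. exists K. intros k Hk. apply HK. lia. }
  apply (proj2 (Hu (phi (S K))) (phi K) (Hphi K)).
  intros n m Hn Hm.
  pose proof (HK K (le_n K) n Hn m Hm). pose proof (HK (S K) ltac:(lia) n Hn m Hm).
  replace (u (phi (S K)) n m - u (phi K) n m)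
    with ((u (phi (S K)) n m - Ql n m) - (u (phi K) n m - Ql n m)) by ring.
  eapply Rle_trans; [apply Rabs_triang|]. rewrite Rabs_Ropp. lra.
Qed.

Definition mix (k : nat) (mu : nat -> R) (F : nat -> nat -> nat -> R) : nat -> nat -> R :=
  fun n m => sumN k (fun i => mu i * F i n m).

Lemma convex_mix Qs k mu F : convex_set Qs -> (1 <= k)%nat -> pos_simplex k mu ->
  (forall i, (i < k)%nat -> Qs (F i)) -> Qs (mix k mu F).
Proof.
  intros Hc. revert mu. induction k as [|k IH]; intros mu Hk [Hmu Hs] HF; [lia|].
  destruct k as [|k].
  - simpl in Hs. rewrite Rplus_0_l in Hs.
    replace (mix 1 mu F) with (F 0%nat); [apply HF; lia|].
    apply functional_extensionality; intros n. apply functional_extensionality; intros m.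
    unfold mix. simpl. rewrite Hs. ring.
  - set (t := sumN (S k) mu).
    assert (Ht : 0 < t) by (apply sumN_pos; [lia|intros; apply Hmu; lia]).
    assert (Es : t + mu (S k) = 1) by exact Hs.
    assert (0 < mu (S k)) by (apply Hmu; lia).
    assert (Hrest : Qs (mix (S k) (fun i => mu i / t) F)).
    { apply IH; [lia|split|intros; apply HF; lia].
      - intros i Hi. apply Rdiv_lt_0_compat; [apply Hmu; lia|exact Ht].
      - unfold Rdiv. rewrite sumN_scal_r. fold t. field. lra. }
    replace (mix (S (S k)) mu F)
      with (fun n m => t * mix (S k) (fun i => mu i / t) F n m + (1 - t) * F (S k) n m).
    + apply Hc; [exact Hrest|apply HF; lia|lra].
    + apply functional_extensionality; intros n. apply functional_extensionality; intros m.
      unfold mix. replace (1 - t) with (mu (S k)) by lra. rewrite <- sumN_scal_l.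
      change (sumN (S (S k)) (fun i => mu i * F i n m))
        with (sumN (S k) (fun i => mu i * F i n m) + mu (S k) * F (S k) n m).
      f_equal. apply sumN_ext. intros i Hi. field. lra.
Qed.

Lemma frob_mix N M V k mu F :
  frob N M V (mix k mu F) = sumN k (fun i => mu i * frob N M V (F i)).
Proof.
  unfold frob, mix.
  transitivity (sumN N (fun n => sumN k (fun i => sumN M (fun m => mu i * (V n m * F i n m))))).
  - apply sumN_ext. intros n Hn. rewrite sumN_swap. apply sumN_ext. intros m Hm.
    rewrite <- sumN_scal_l. apply sumN_ext. intros; ring.
  - rewrite sumN_swap. apply sumN_ext. intros i Hi. rewrite <- sumN_scal_l.
    apply sumN_ext. intros n Hn. rewrite <- sumN_scal_l. reflexivity.
Qed.

(* Hedge over the net points with gains [frob V (F i)] against the responses to its own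
   mixtures: the average response is good at every net point. *)
Lemma net_response N M k F (B a eps : R) (sel : (nat -> R) -> (nat -> R) * (nat -> nat -> R)) :
  (1 <= k)%nat -> 0 < B -> 0 < eps ->
  (forall i, (i < k)%nat -> in_simplex_mat N M (F i)) ->
  (forall mu, pos_simplex k mu -> bounded_feasible N M B (fst (sel mu)) (snd (sel mu)) /\
     a <= - frob N M (snd (sel mu)) (mix k mu F)) ->
  exists p V, bounded_feasible N M B p V /\
    forall i, (i < k)%nat -> a - eps <= - frob N M V (F i).
Proof.
  intros Hk HB He HF Hsel.
  set (G := fun mu i => B + frob N M (snd (sel mu)) (F i)).
  assert (HG : forall mu, pos_simplex k mu -> forall i, (i < k)%nat -> 0 <= G mu i <= B + B).
  { intros mu Hmu i Hi. destruct (Hsel mu Hmu) as [HK _].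
    pose proof (frob_bound N M B _ _ (F i) HK (HF i Hi)) as Hb.
    unfold G. unfold Rabs in Hb. destruct (Rcase_abs _); lra. }
  destruct (no_regret k (B + B) G eps Hk ltac:(lra) He HG) as [T [W [HT [HW Hreg]]]].
  assert (HTp : 0 < INR T) by (apply lt_0_INR; lia).
  set (Vt := fun t => snd (sel (W t))).
  assert (Hmixed : forall t, sumN k (fun j => W t j * G (W t) j) <= B - a).
  { intros t. destruct (HW t) as [_ Hs]. destruct (Hsel (W t) (HW t)) as [_ Hv].
    unfold G. rewrite (sumN_ext k _ (fun j => B * W t j + W t j * frob N M (Vt t) (F j)))
      by (intros; unfold Vt; ring).
    rewrite sumN_plus, sumN_scal_l, Hs, <- frob_mix. fold (Vt t) in Hv. lra. }
  exists (average T (fun t => fst (sel (W t)))), (average_mat T Vt). split.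
  - apply bounded_feasible_average; auto. intros t Ht. apply (Hsel (W t) (HW t)).
  - intros i Hi. rewrite frob_average_mat by auto.
    assert (Hsum : sumN T (fun t => frob N M (Vt t) (F i)) <= INR T * (- a + eps)).
    { pose proof (Hreg i Hi) as Hr. unfold G in Hr at 1. rewrite sumN_plus, sumN_const in Hr.
      pose proof (sumN_le T _ _ (fun t _ => Hmixed t)) as Hm. rewrite sumN_const in Hm.
      unfold Vt. lra. }
    apply Rmult_le_reg_l with (INR T); auto.
    replace (INR T * - (sumN T (fun t => frob N M (Vt t) (F i)) / INR T))
      with (- sumN T (fun t => frob N M (Vt t) (F i))) by (field; lra).
    lra.
Qed.

(* Smoothing with [eta <= eps / 8] fixes a common bound [B]; a [d]-net of [Qs] with
   [B * M * d = eps / 4] reduces the problem to [net_response]. *)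
Lemma uniform_response N M Qs c eps :
  (1 <= N)%nat -> (1 <= M)%nat -> (exists Q, Qs Q) ->
  (forall Q, Qs Q -> in_simplex_mat N M Q) -> convex_set Qs -> compact_set N M Qs ->
  (forall v Q, Qs Q -> c <= D_obj N M v Q) -> 0 < eps ->
  exists B p V, bounded_feasible N M B p V /\ forall Q, Qs Q -> c - eps <= - frob N M V Q.
Proof.
  intros HN HM Hne Hsub Hconv Hcomp Hc He.
  set (eta := Rmin (1/2) (eps / 8)).
  assert (Heta : 0 < eta <= 1/2) by (unfold eta; split; [apply Rmin_glb_lt|apply Rmin_l]; lra).
  assert (Hln : - (eps / 4) <= ln (1 - eta))
    by (pose proof (ln_1_minus_ge eta Heta); assert (eta <= eps / 8) by apply Rmin_r; lra).
  set (B := smoothing_bound M eta).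
  assert (HB : 0 < B) by (apply smoothing_bound_pos; auto; lra).
  assert (HMp : 0 < INR M) by (apply lt_0_INR; lia).
  set (d := eps / (4 * B * INR M)).
  assert (Hd : 0 < d) by (apply Rdiv_lt_0_compat; [lra|apply Rmult_lt_0_compat; lra]).
  destruct (finite_net N M Qs d Hd Hne Hcomp) as [k [F [Hk [HF Hcov]]]].
  destruct (choice (fun (mu : nat -> R) (pV : (nat -> R) * (nat -> nat -> R)) =>
              pos_simplex k mu -> bounded_feasible N M B (fst pV) (snd pV) /\
                c - eps / 2 <= - frob N M (snd pV) (mix k mu F))) as [sel Hsel].
  { intros mu. destruct (classic (pos_simplex k mu)) as [Hmu|Hmu];
      [|exists (fun _ => 0, fun _ _ => 0); tauto].
    assert (Hin : Qs (mix k mu F)) by (apply convex_mix; auto).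
    destruct (bounded_feasible_response N M eta c (eps / 4) (mix k mu F) HN HM ltac:(lra)
                ltac:(lra) (Hsub _ Hin) (fun v => Hc v _ Hin)) as [p [V [HK Hv]]].
    exists (p, V). intros _. split; [exact HK|simpl; lra]. }
  destruct (net_response N M k F B (c - eps / 2) (eps / 4) sel Hk HB ltac:(lra)
              (fun i Hi => Hsub _ (HF i Hi)) Hsel) as [p [V [HK HV]]].
  exists B, p, V. split; [exact HK|]. intros Q HQ. destruct (Hcov Q HQ) as [i [Hi Hcl]].
  pose proof (frob_lipschitz N M B p V Q (F i) d HK ltac:(lra) Hcl) as Hclose.
  replace (B * INR M * d) with (eps / 4) in Hclose by (unfold d; field; lra).
  specialize (HV i Hi). unfold Rabs in Hclose. destruct (Rcase_abs _); lra.
Qed.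

(** * Strong duality *)

Lemma glb_exists (E : R -> Prop) a : (exists x, E x) -> is_lower_bound E a ->
  exists g, is_glb E g.
Proof.
  intros [x0 Hx0] Ha.
  destruct (completeness (fun y => E (- y))) as [m [Hm1 Hm2]].
  - exists (- a). intros y Hy. specialize (Ha _ Hy). lra.
  - exists (- x0). rewrite Ropp_involutive. auto.
  - exists (- m). split.
    + intros y Hy. assert (- y <= m) by (apply Hm1; rewrite Ropp_involutive; auto). lra.
    + intros b Hb. assert (m <= - b) by (apply Hm2; intros y Hy; specialize (Hb _ Hy); lra). lra.
Qed.

Lemma is_lub_approx (E : R -> Prop) c : is_upper_bound E c ->
  (forall eps, 0 < eps -> exists x, E x /\ c - eps <= x) -> is_lub E c.
Proof.
  intros Hub Happ. split; [exact Hub|]. intros b Hb.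
  destruct (Rle_dec c b) as [|Hlt]; [auto|exfalso].
  destruct (Happ ((c - b) / 2) ltac:(lra)) as [x [Hx Hcx]]. specialize (Hb x Hx). lra.
Qed.

Lemma P_values_0 N M Qs : (1 <= N)%nat -> (exists Q, Qs Q) -> P_values N M Qs 0.
Proof.
  intros HN [Q0 HQ0]. assert (HNp : 0 < INR N) by (apply lt_0_INR; lia).
  assert (Hfrob : forall Q, frob N M (fun _ _ => 0) Q = 0)
    by (intros; apply sumN_eq0; intros; apply sumN_eq0; intros; ring).
  exists (fun _ => / INR N), (fun _ => 0), (fun _ _ => 0), 0. split; [|split].
  - assert (Hsum : sumN N (fun _ => / INR N) = 1) by (rewrite sumN_const; field; lra).
    split; [split; [intros; left; apply Rinv_0_lt_compat; auto|exact Hsum]|].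
    intros m Hm. split; [intros; lra|]. rewrite <- Hsum. right. apply sumN_ext. intros n Hn.
    unfold persp_term. destruct (Rlt_dec 0 (/ INR N)) as [_|Hn0];
      [|pose proof (Rinv_0_lt_compat _ HNp); lra].
    rewrite Rminus_0_r, Rdiv_0_l, exp_0. ring.
  - split.
    + intros x [Q [_ ->]]. rewrite Hfrob. lra.
    + intros b Hb. apply Hb. exists Q0. split; auto.
  - rewrite sumN_eq0 by auto. ring.
Qed.

Lemma P_values_le_mutual_info N M Qs x : (forall Q, Qs Q -> in_simplex_mat N M Q) ->
  P_values N M Qs x ->
  exists p, in_simplex N p /\ forall Q, Qs Q -> x <= mutual_info N M p Q.
Proof.
  intros Hsub [p [lam [V [s [HF [Hs ->]]]]]]. exists p. split; [apply HF|].
  intros Q HQ. assert (frob N M V Q <= s) by (apply Hs; exists Q; auto).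
  pose proof (P_objective_le_mutual_info N M p lam V Q HF (Hsub Q HQ)). lra.
Qed.

Lemma cap_values_le_D_values N M Qs x y : (1 <= M)%nat ->
  (forall Q, Qs Q -> in_simplex_mat N M Q) ->
  cap_values N M Qs x -> D_values N M Qs y -> x <= y.
Proof.
  intros HM Hsub [p [Hp [Hglb _]]] [v [Q [HQ ->]]].
  assert (x <= mutual_info N M p Q) by (apply Hglb; exists Q; auto).
  pose proof (mutual_info_le_D_obj N M p Q v HM Hp (Hsub Q HQ)). lra.
Qed.

Lemma P_values_le_cap_value N M Qs x : (forall Q, Qs Q -> in_simplex_mat N M Q) ->
  (exists Q, Qs Q) -> P_values N M Qs x -> exists z, cap_values N M Qs z /\ x <= z.
Proof.
  intros Hsub [Q0 HQ0] Hx. destruct (P_values_le_mutual_info N M Qs x Hsub Hx) as [p [Hp Hle]].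
  destruct (glb_exists (fun y => exists Q, Qs Q /\ y = mutual_info N M p Q) x) as [z Hz].
  - exists (mutual_info N M p Q0). exists Q0. auto.
  - intros y [Q [HQ ->]]. auto.
  - exists z. split; [exists p; auto|]. apply Hz. intros y [Q [HQ ->]]. auto.
Qed.

Lemma P_values_le_D_values N M Qs x y : (1 <= M)%nat ->
  (forall Q, Qs Q -> in_simplex_mat N M Q) ->
  P_values N M Qs x -> D_values N M Qs y -> x <= y.
Proof.
  intros HM Hsub Hx [v [Q [HQ ->]]].
  destruct (P_values_le_mutual_info N M Qs x Hsub Hx) as [p [Hp Hle]].
  pose proof (mutual_info_le_D_obj N M p Q v HM Hp (Hsub Q HQ)). specialize (Hle Q HQ). lra.
Qed.

Lemma P_values_approach N M Qs c eps :
  (1 <= N)%nat -> (1 <= M)%nat -> (exists Q, Qs Q) ->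
  (forall Q, Qs Q -> in_simplex_mat N M Q) -> convex_set Qs -> compact_set N M Qs ->
  is_lower_bound (D_values N M Qs) c -> 0 < eps ->
  exists x, P_values N M Qs x /\ c - eps <= x.
Proof.
  intros HN HM Hne Hsub Hconv Hcomp Hc He.
  destruct (uniform_response N M Qs c eps HN HM Hne Hsub Hconv Hcomp) as [B [p [V [HK HV]]]];
    [intros v Q HQ; apply Hc; exists v, Q; auto|auto|].
  destruct Hne as [Q0 HQ0].
  destruct (completeness (fun x => exists Q, Qs Q /\ x = frob N M V Q)) as [s Hs].
  - exists (- (c - eps)). intros x [Q [HQ ->]]. specialize (HV Q HQ). lra.
  - exists (frob N M V Q0). exists Q0. auto.
  - exists (sumN N (fun _ => 0) - s). split.
    + exists p, (fun _ => 0), V, s. split; [|split]; auto.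
      apply (bounded_feasible_P_feasible N M B p V HK).
    + assert (s <= - (c - eps)) by (apply Hs; intros x [Q [HQ ->]]; specialize (HV Q HQ); lra).
      rewrite sumN_eq0 by auto. lra.
Qed.

Theorem proposition2 (N M : nat) (Qs : (nat -> nat -> R) -> Prop)
  (HN : (1 <= N)%nat)
  (Hne : exists Q, Qs Q)
  (Hsub : forall Q, Qs Q -> in_simplex_mat N M Q)
  (Hconv : convex_set Qs)
  (Hcomp : compact_set N M Qs) :
  exists c : R,
    is_lub (P_values N M Qs) c /\
    is_glb (D_values N M Qs) c /\
    is_lub (cap_values N M Qs) c.
Proof.
  assert (HM : (1 <= M)%nat).
  { destruct Hne as [Q0 HQ0]. destruct M; [|lia].
    destruct (Hsub Q0 HQ0 0%nat HN) as [_ H]. simpl in H. lra. }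
  destruct (glb_exists (D_values N M Qs) 0) as [c Hc].
  { destruct Hne as [Q0 HQ0]. exists (D_obj N M (fun _ => 0) Q0), (fun _ => 0), Q0. auto. }
  { intros y Hy. apply (P_values_le_D_values N M Qs); auto. apply P_values_0; auto. }
  exists c. split; [|split; [exact Hc|]]; apply is_lub_approx.
  - intros x Hx. apply Hc. intros y Hy. apply (P_values_le_D_values N M Qs); auto.
  - intros eps He. apply (P_values_approach N M Qs c eps); auto. apply Hc.
  - intros x Hx. apply Hc. intros y Hy. apply (cap_values_le_D_values N M Qs); auto.
  - intros eps He. destruct (P_values_approach N M Qs c eps) as [x [Hx Hcx]]; auto; [apply Hc|].
    destruct (P_values_le_cap_value N M Qs x Hsub Hne Hx) as [z [Hz Hxz]].
    exists z. split; [exact Hz|lra].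
Qed.
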